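(* Let $3\leq d_A\leq d_B\leq d_C$ be integers and consider the tripartite system $\mathbb{C}^{d_A}\otimes\mathbb{C}^{d_B}\otimes\mathbb{C}^{d_C}$. Then the set of (unnormalized) product states $\mathcal{U}=\bigcup_{i=1}^3(\mathcal{A}_i\cup\mathcal{B}_i)\cup\mathcal{F}\cup\{|S\rangle\}$ defined in the context is an unextendible product basis of size $d_Ad_Bd_C-8$.
   Context: $\{|0\rangle,\dots,|d_X-1\rangle\}$ is the computational basis of party $X\in\{A,B,C\}$, $\mathbb{Z}_n=\{0,1,\dots,n-1\}$, and $w_n=e^{2\pi\sqrt{-1}/n}$. For $X\in\{A,B,C\}$ define $|\eta_s\rangle_X=\sum_{t=0}^{d_X-2}w_{d_X-1}^{st}|t\rangle_X$ and $|\xi_s\rangle_X=\sum_{t=0}^{d_X-2}w_{d_X-1}^{st}|t+1\rangle_X$ for $s\in\mathbb{Z}_{d_X-1}$, and $|\beta_s\rangle_X=\sum_{t=0}^{d_X-3}w_{d_X-2}^{st}|t+1\rangle_X$ for $s\in\mathbb{Z}_{d_X-2}$. Define $\mathcal{A}_1=\{|\xi_i\rangle_A|0\rangle_B|\eta_k\rangle_C:(i,k)\in\mathbb{Z}_{d_A-1}\times\mathbb{Z}_{d_C-1}\setminus\{(0,0)\}\}$, $\mathcal{A}_2=\{|\xi_i\rangle_A|\eta_j\rangle_B|d_C-1\rangle_C:(i,j)\in\mathbb{Z}_{d_A-1}\times\mathbb{Z}_{d_B-1}\setminus\{(0,0)\}\}$, $\mathcal{A}_3=\{|d_A-1\rangle_A|\xi_j\rangle_B|\eta_k\rangle_C:(j,k)\in\mathbb{Z}_{d_B-1}\times\mathbb{Z}_{d_C-1}\setminus\{(0,0)\}\}$,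 $\mathcal{B}_1=\{|\eta_i\rangle_A|d_B-1\rangle_B|\xi_k\rangle_C:(i,k)\in\mathbb{Z}_{d_A-1}\times\mathbb{Z}_{d_C-1}\setminus\{(0,0)\}\}$, $\mathcal{B}_2=\{|\eta_i\rangle_A|\xi_j\rangle_B|0\rangle_C:(i,j)\in\mathbb{Z}_{d_A-1}\times\mathbb{Z}_{d_B-1}\setminus\{(0,0)\}\}$, $\mathcal{B}_3=\{|0\rangle_A|\eta_j\rangle_B|\xi_k\rangle_C:(j,k)\in\mathbb{Z}_{d_B-1}\times\mathbb{Z}_{d_C-1}\setminus\{(0,0)\}\}$, $\mathcal{F}=\{|\beta_i\rangle_A|\beta_j\rangle_B|\beta_k\rangle_C:(i,j,k)\in\mathbb{Z}_{d_A-2}\times\mathbb{Z}_{d_B-2}\times\mathbb{Z}_{d_C-2}\setminus\{(0,0,0)\}\}$, and the ''stopper'' state $|S\rangle=(\sum_{i=0}^{d_A-1}|i\rangle)_A(\sum_{j=0}^{d_B-1}|j\rangle)_B(\sum_{k=0}^{d_C-1}|k\rangle)_C$. An unextendible product basis (UPB) of a multipartite system is a set of mutually orthogonal product states, not spanning the whole space, whose orthogonal complement contains no (fully) product state. *)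

From HB Require Import structures.
From mathcomp Require Import all_boot all_order all_algebra.
From mathcomp Require Import complex.
From mathcomp Require Import Rstruct.
From Stdlib Require Import Reals.
Import GRing.Theory Num.Theory.
Local Open Scope ring_scope.

Definition CC := complex R.

Definition w (n : nat) : CC :=
  Complex (Rtrigo_def.cos (2 * PI / INR n)%R) (Rtrigo_def.sin (2 * PI / INR n)%R).

(* computational basis vector |t>, for a natural number t (zero if t >= d). *)
Definition ket (d t : nat) : 'I_d -> CC := fun x => if nat_of_ord x == t then 1 else 0.

Definition eta (d s : nat) : 'I_d -> CC :=
  fun x => \sum_(t < d.-1) w d.-1 ^+ (s * t) * ket d t x.
Definition xi (d s : nat) : 'I_d -> CC :=
  fun x => \sum_(t < d.-1) w d.-1 ^+ (s * t) * ket d t.+1 x.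
Definition beta (d s : nat) : 'I_d -> CC :=
  fun x => \sum_(t < d.-2) w d.-2 ^+ (s * t) * ket d t.+1 x.
Definition allones (d : nat) : 'I_d -> CC := fun x => \sum_(t < d) ket d t x.

Definition tri (dA dB dC : nat) := {ffun 'I_dA * 'I_dB * 'I_dC -> CC}.

Definition prod3 {dA dB dC : nat} (a : 'I_dA -> CC) (b : 'I_dB -> CC) (c : 'I_dC -> CC)
  : tri dA dB dC := [ffun x => a x.1.1 * b x.1.2 * c x.2].

Definition inner {dA dB dC : nat} (u v : tri dA dB dC) : CC :=
  \sum_x (u x)^* * v x.

Definition product_state {dA dB dC : nat} (v : tri dA dB dC) : Prop :=
  v != 0 /\ exists a b c, v = prod3 a b c.

Definition spans_all {dA dB dC : nat} (U : seq (tri dA dB dC)) : Prop :=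
  forall v : tri dA dB dC, exists coef : nat -> CC,
    forall x, v x = \sum_(i < size U) coef i * (nth v U i) x.

Definition is_UPB {dA dB dC : nat} (U : seq (tri dA dB dC)) : Prop :=
  [/\ (forall u, u \in U -> product_state u),
      (forall u v, u \in U -> v \in U -> u != v -> inner u v = 0),
      ~ spans_all U &
      (forall v, product_state v -> exists2 u, u \in U & inner u v != 0)].

Definition pairs0 (m n : nat) : seq (nat * nat) :=
  [seq p <- [seq (i, k) | i <- iota 0 m, k <- iota 0 n] | p != (0, 0)%N].
Definition triples0 (m n l : nat) : seq (nat * nat * nat) :=
  [seq p <- [seq (ij, k) | ij <- [seq (i, j) | i <- iota 0 m, j <- iota 0 n], k <- iota 0 l]
     | p != (0, 0, 0)%N].

Section Sets.
Variables dA dB dC : nat.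
Definition A1 : seq (tri dA dB dC) :=
  [seq prod3 (xi dA p.1) (ket dB 0) (eta dC p.2) | p <- pairs0 dA.-1 dC.-1].
Definition A2 : seq (tri dA dB dC) :=
  [seq prod3 (xi dA p.1) (eta dB p.2) (ket dC dC.-1) | p <- pairs0 dA.-1 dB.-1].
Definition A3 : seq (tri dA dB dC) :=
  [seq prod3 (ket dA dA.-1) (xi dB p.1) (eta dC p.2) | p <- pairs0 dB.-1 dC.-1].
Definition B1 : seq (tri dA dB dC) :=
  [seq prod3 (eta dA p.1) (ket dB dB.-1) (xi dC p.2) | p <- pairs0 dA.-1 dC.-1].
Definition B2 : seq (tri dA dB dC) :=
  [seq prod3 (eta dA p.1) (xi dB p.2) (ket dC 0) | p <- pairs0 dA.-1 dB.-1].
Definition B3 : seq (tri dA dB dC) :=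
  [seq prod3 (ket dA 0) (eta dB p.1) (xi dC p.2) | p <- pairs0 dB.-1 dC.-1].
Definition FF : seq (tri dA dB dC) :=
  [seq prod3 (beta dA p.1.1) (beta dB p.1.2) (beta dC p.2) | p <- triples0 dA.-2 dB.-2 dC.-2].
Definition stopper : tri dA dB dC := prod3 (allones dA) (allones dB) (allones dC).
Definition UU : seq (tri dA dB dC) :=
  A1 ++ A2 ++ A3 ++ B1 ++ B2 ++ B3 ++ FF ++ [:: stopper].
End Sets.

(* Every member of U is a tensor product of the kets |0>, |d-1> and of discrete Fourier vectors
   (eta, xi, beta) on windows of consecutive basis vectors, so inner products factor into local
   ones; orthogonality then follows from disjoint supports or from the orthogonality of
   characters. The vectors that A1 and B1 omit at index (0, 0) have the same overlap
   (dA-1)(dC-1) with the stopper, so their difference is orthogonal to U and U does not span.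

   For unextendibility let a (x) b (x) c be orthogonal to all members but the stopper.
   Orthogonality to A1 says that b_0 times the two-dimensional Fourier transform of
   (a_1, ..., a_{dA-1}) (x) (c_0, ..., c_{dC-2}) vanishes off the origin: so b_0 = 0, or one of
   these two windows is zero, or both are constant. The other families A_i, B_i give the
   analogous constraints, and F forces a zero middle window (x_1, ..., x_{d-2}) in some party or
   constant middle windows in all three. These constraints only involve which of x_0, x_1, x_{d-1}
   vanish or coincide and whether the middle window is constant, so they can be checked
   exhaustively on these finitely many shapes: every party has a nonzero coordinate sum, i.e. the
   state overlaps the stopper. *)

From Stdlib Require Import Reals Lra.
From HB Require Import structures.
From mathcomp Require Import all_boot all_order all_algebra.
From mathcomp Require Import complex Rstruct zify.
Import GRing.Theory Num.Theory.
Local Open Scope ring_scope.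

Lemma mulcE (a b c d : R) :
  (Complex a b : CC) * Complex c d = Complex (a * c - b * d) (a * d + b * c).
Proof. by []. Qed.

Definition angle (N : nat) : R := Rdiv (Rmult 2 PI) (INR N).

Lemma w_expE N k :
  w N ^+ k = Complex (cos (Rmult (INR k) (angle N))) (sin (Rmult (INR k) (angle N))).
Proof.
elim: k => [|k IHk]; first by rewrite expr0 Rmult_0_l cos_0 sin_0.
rewrite exprSr IHk mulcE S_INR Rmult_plus_distr_r Rmult_1_l cos_plus sin_plus.
by congr Complex; rewrite /= Rplus_comm.
Qed.

Lemma w_expN N : (0 < N)%N -> w N ^+ N = 1.
Proof.
move=> N_gt0; rewrite w_expE.
have -> : Rmult (INR N) (angle N) = Rmult 2 PI.
  by rewrite /angle; field; apply: not_0_INR; lia.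
by rewrite cos_2PI sin_2PI.
Qed.

(* [k * angle N] lies strictly between [0] and [2 PI], where [sin] vanishes only at [PI],
   and [cos PI = -1]. *)
Lemma w_exp_neq1 N k : (0 < k < N)%N -> w N ^+ k != 1.
Proof.
move=> /andP[k_gt0 kN]; rewrite w_expE; apply/eqP => -[cos1 sin0].
have N_gt0 : Rlt 0 (INR N) by apply: lt_0_INR; lia.
have k_gt0' : Rlt 0 (INR k) by apply: lt_0_INR; lia.
have kN' : Rlt (INR k) (INR N) by apply: lt_INR; lia.
have PI_gt0 := PI_RGT_0.
set x := Rmult (INR k) (angle N) in cos1 sin0.
have x_gt0 : Rlt 0 x.
  by apply: Rmult_lt_0_compat => //; apply: Rdiv_lt_0_compat; lra.
have x_lt2PI : Rlt x (Rmult 2 PI).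
  apply: (Rmult_lt_reg_r (INR N)) => //.
  have -> : Rmult x (INR N) = Rmult (INR k) (Rmult 2 PI) by rewrite /x /angle; field; lra.
  nra.
have {}sin0 : sin x = R0 := sin0.
have {}cos1 : cos x = R1 := cos1.
case: (Rtotal_order x PI) => [x_ltPI|[x_PI|x_gtPI]].
- by have := sin_gt_0 x x_gt0 x_ltPI; lra.
- by move: cos1; rewrite x_PI cos_PI; lra.
- by have := sin_lt_0 x x_gtPI x_lt2PI; lra.
Qed.

Lemma w_prim_root N : (0 < N)%N -> N.-primitive_root (w N).
Proof.
move=> N_gt0; have [m m_prim m_dvdN] := prim_order_exists N_gt0 (w_expN _ N_gt0).
have m_gt0 := prim_order_gt0 m_prim.
have [m_ltN|] := ltnP m N.
  by have := w_exp_neq1 N m; rewrite m_gt0 m_ltN (prim_expr_order m_prim) eqxx => /(_ isT).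
move=> N_le_m; suff mN : m = N by move: m_prim; rewrite mN.
by apply/eqP; rewrite eqn_leq N_le_m dvdn_leq.
Qed.

Lemma conjw_mulw N : (w N)^* * w N = 1.
Proof.
rewrite /w; set x := Rdiv (Rmult 2 PI) (INR N).
have sc : sin x * sin x + cos x * cos x = 1 := sin2_cos2 x.
by rewrite /= mulcE mulNr opprK addrC sc mulNr mulrC subrr.
Qed.

Lemma conj_w N : (0 < N)%N -> (w N)^* = w N ^+ N.-1.
Proof.
move=> N_gt0; have w_neq0 : w N != 0 by rewrite (prim_root_eq0 (w_prim_root _ N_gt0)) -lt0n.
by apply: (mulIf w_neq0); rewrite conjw_mulw -exprSr prednK // w_expN.
Qed.

Definition dft N (g : nat -> CC) (s : nat) : CC := \sum_(t < N) (w N ^+ (s * t))^* * g t.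

Definition zero_on N (g : nat -> CC) := forall t, (t < N)%N -> g t = 0.
Definition const_on N (g : nat -> CC) := forall t, (t < N)%N -> g t = g 0%N.

Lemma eq_dft N g g' s : (forall t, (t < N)%N -> g t = g' t) -> dft N g s = dft N g' s.
Proof. by move=> gg'; apply: eq_bigr => t _; rewrite gg'. Qed.

Lemma dft_w {N s s'} : (0 < N)%N -> (s < N)%N -> (s' < N)%N ->
  dft N (fun t => w N ^+ (s' * t)) s = if s == s' then N%:R else 0.
Proof.
move=> N_gt0 sN s'N; rewrite /dft.
(* As [(w N)^* = w N ^+ N.-1], the summand is [z ^+ t] where [z] is [w N] raised to [s' - s]
   modulo [N], so that [z = 1] iff [s = s']. *)
set z := w N ^+ (N.-1 * s + s').
have zE t : (w N ^+ (s * t))^* * w N ^+ (s' * t) = z ^+ t.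
  rewrite rmorphXn /= conj_w // -exprM -exprM -exprD.
  by rewrite mulnDl mulnA.
under eq_bigr => t _ do rewrite zE.
have w_prim := w_prim_root _ N_gt0.
have z1E : (z == 1) = (s == s').
  rewrite -(expr0 (w N)) (eq_prim_root_expr w_prim) -(eqn_modDr s) add0n.
  rewrite -addnA (addnC s') addnA -{2}(prednK N_gt0) -mulSnr prednK //.
  by rewrite mulnC modnMDl !modn_small // eq_sym.
have [ss' | s_neq_s'] := eqVneq s s'.
  have /eqP -> : z == 1 by rewrite z1E ss'.
  by rewrite (eq_bigr (fun _ => 1)) ?sumr_const ?card_ord // => t _; rewrite expr1n.
have z_neq1 : z != 1 by rewrite z1E.
have zN : z ^+ N = 1 by rewrite /z -exprM mulnC exprM w_expN // expr1n.
apply/eqP; move/eqP: zN.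
by rewrite -subr_eq0 subrX1 mulf_eq0 subr_eq0 (negbTE z_neq1).
Qed.

Lemma dft1 {N s} : (0 < N)%N -> (s < N)%N -> dft N (fun=> 1) s = if s == 0%N then N%:R else 0.
Proof.
by move=> N_gt0 sN; rewrite -(dft_w N_gt0 sN N_gt0); apply: eq_dft => t _; rewrite mul0n expr0.
Qed.

Lemma dft_inversion {N} g {t} : (0 < N)%N -> (t < N)%N ->
  \sum_(s < N) w N ^+ (s * t) * dft N g s = N%:R * g t.
Proof.
move=> N_gt0 tN; under eq_bigr => s _ do rewrite mulr_sumr.
rewrite exchange_big /=.
transitivity (\sum_(r < N) (if nat_of_ord r == t then N%:R else 0) * g r).
  apply: eq_bigr => r _; rewrite -(dft_w N_gt0 (ltn_ord r) tN) mulr_suml.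
  by apply: eq_bigr => s _; rewrite mulrCA mulrA [(s * r)%N]mulnC [(s * t)%N]mulnC.
rewrite (bigD1 (Ordinal tN)) //= eqxx big1 ?addr0 // => r /negbTE r_neq_t.
by rewrite -val_eqE /= in r_neq_t; rewrite r_neq_t mul0r.
Qed.

Lemma dft_eq0 N g : (0 < N)%N -> (forall s, (s < N)%N -> dft N g s = 0) -> zero_on N g.
Proof.
move=> N_gt0 g_dft0 t tN; have := dft_inversion g N_gt0 tN.
rewrite big1 => [/esym/eqP|s _]; last by rewrite g_dft0 ?mulr0.
by rewrite mulf_eq0 pnatr_eq0 gtn_eqF // => /eqP.
Qed.

Lemma dft_const N g : (0 < N)%N -> (forall s, (0 < s < N)%N -> dft N g s = 0) -> const_on N g.
Proof.
move=> N_gt0 g_dft0.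
have gE t : (t < N)%N -> N%:R * g t = dft N g 0.
  move=> tN; rewrite -(dft_inversion g N_gt0 tN) (bigD1 (Ordinal N_gt0)) //=.
  rewrite mul0n expr0 mul1r big1 ?addr0 // => s s_neq0.
  rewrite g_dft0 ?mulr0 // ltn_ord andbT lt0n.
  by apply: contra s_neq0 => /eqP s0; apply/eqP/val_inj.
have N_neq0 : N%:R != 0 :> CC by rewrite pnatr_eq0 gtn_eqF.
by move=> t tN; apply: (mulfI N_neq0); rewrite !gE.
Qed.

Lemma dft_supportP {N} g : (0 < N)%N -> zero_on N g \/ exists2 s, (s < N)%N & dft N g s != 0.
Proof.
move=> N_gt0.
have [/forallP g_dft0|/forallPn[s g_dft_s]] := boolP [forall s : 'I_N, dft N g s == 0].
  by left; apply: dft_eq0 => // s sN; apply/eqP: (g_dft0 (Ordinal sN)).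
by right; exists (nat_of_ord s).
Qed.

Lemma dft_const_factor {N g} {x : CC} : (0 < N)%N -> x != 0 ->
  (forall s, (0 < s < N)%N -> dft N g s * x = 0) -> const_on N g.
Proof.
move=> N_gt0 x_neq0 gx0; apply: dft_const => // s s_range; apply/eqP.
by have /eqP := gx0 s s_range; rewrite mulf_eq0 (negbTE x_neq0) orbF.
Qed.

Lemma dft_prod2_origin {N M g h} : (0 < N)%N -> (0 < M)%N ->
  (forall i k, (i < N)%N -> (k < M)%N -> (i != 0%N) || (k != 0%N) ->
     dft N g i * dft M h k = 0) ->
  [\/ zero_on N g, zero_on M h | const_on N g /\ const_on M h].
Proof.
move=> N_gt0 M_gt0 gh0.
have [?|[i iN gi]] := dft_supportP g N_gt0; first exact: Or31.
have [?|[k kM hk]] := dft_supportP h M_gt0; first exact: Or32.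
apply: Or33; split.
  apply: (dft_const_factor N_gt0 hk) => s /andP[s_gt0 sN].
  by rewrite gh0 // -lt0n s_gt0.
apply: (dft_const_factor M_gt0 gi) => s /andP[s_gt0 sM].
by rewrite mulrC gh0 // -(lt0n s) s_gt0 orbT.
Qed.

Lemma dft_prod3_origin {N M L g h k} : (0 < N)%N -> (0 < M)%N -> (0 < L)%N ->
  (forall i j l, (i < N)%N -> (j < M)%N -> (l < L)%N -> [|| i != 0%N, j != 0%N | l != 0%N] ->
     dft N g i * dft M h j * dft L k l = 0) ->
  [\/ zero_on N g, zero_on M h, zero_on L k | [/\ const_on N g, const_on M h & const_on L k]].
Proof.
move=> N_gt0 M_gt0 L_gt0 ghk0.
have [?|[i iN gi]] := dft_supportP g N_gt0; first exact: Or41.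
have [?|[j jM hj]] := dft_supportP h M_gt0; first exact: Or42.
have [?|[l lL kl]] := dft_supportP k L_gt0; first exact: Or43.
apply: Or44; split.
- apply: (dft_const_factor N_gt0 (mulf_neq0 hj kl)) => s /andP[s_gt0 sN].
  by rewrite mulrA ghk0 // -lt0n s_gt0.
- apply: (dft_const_factor M_gt0 (mulf_neq0 gi kl)) => s /andP[s_gt0 sM].
  by rewrite mulrCA mulrA ghk0 // -(lt0n s) s_gt0 orbT.
- apply: (dft_const_factor L_gt0 (mulf_neq0 gi hj)) => s /andP[s_gt0 sL].
  by rewrite mulrC ghk0 // -(lt0n s) s_gt0 !orbT.
Qed.

Definition entry {d} (a : 'I_d -> CC) (t : nat) : CC := \sum_(x : 'I_d) ket d t x * a x.
Definition dot {d} (u v : 'I_d -> CC) : CC := \sum_(x : 'I_d) (u x)^* * v x.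

Lemma dotC d (u v : 'I_d -> CC) : dot u v = (dot v u)^*.
Proof. by rewrite /dot rmorph_sum; apply: eq_bigr => x _; rewrite rmorphM /= conjCK mulrC. Qed.

Lemma conj_ket d k x : (ket d k x)^* = ket d k x.
Proof. by rewrite /ket; case: eqP; rewrite ?conjC1 ?conjC0. Qed.

Lemma dot_ket d k a : dot (ket d k) a = entry a k.
Proof. by apply: eq_bigr => x _; rewrite conj_ket. Qed.

Lemma entry_ket d k t : entry (ket d k) t = if (t < d)%N && (t == k) then 1 else 0.
Proof.
have [td|dt] /= := ltnP t d; last first.
  rewrite /entry big1 // => x _; rewrite /ket; case: eqP => [xt|]; last by rewrite mul0r.
  by move: (ltn_ord x); rewrite xt ltnNge dt.
rewrite /entry (bigD1 (Ordinal td)) //= big1 => [|x x_neq_t].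
  by rewrite /ket /= eqxx mul1r addr0; case: eqP => // ->.
by rewrite /ket ifN ?mul0r //; apply: contra x_neq_t => /eqP xt; apply/eqP/val_inj.
Qed.

Section Windows.
Variables (d L sh : nat) (c : nat -> CC) (h : nat -> nat) (v : 'I_d -> CC).
Hypothesis vE : forall x, v x = \sum_(r < L) c r * ket d (h r) x.

Lemma dot_window a : dot v a = \sum_(r < L) (c r)^* * entry a (h r).
Proof.
rewrite /dot; under eq_bigr => x _ do rewrite vE rmorph_sum mulr_suml.
rewrite exchange_big; apply: eq_bigr => r _; rewrite mulr_sumr; apply: eq_bigr => x _.
by rewrite rmorphM /= conj_ket mulrA.
Qed.

Hypotheses (hE : forall r, h r = (r + sh)%N) (L_le : (L + sh <= d)%N).

Lemma entry_window t : entry v t = if (sh <= t < L + sh)%N then c (t - sh) else 0.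
Proof.
transitivity (\sum_(r < L) c r * entry (ket d (h r)) t).
  rewrite /entry; under eq_bigr => x _ do rewrite vE mulr_sumr.
  rewrite exchange_big; apply: eq_bigr => r _; rewrite mulr_sumr.
  by apply: eq_bigr => x _; rewrite mulrCA.
under eq_bigr => r _ do rewrite entry_ket hE mulrC.
have [/andP[sh_le tL]|t_out] := boolP (sh <= t < L + sh)%N.
  have tshL : (t - sh < L)%N by rewrite ltn_subLR // addnC.
  have td : (t < d)%N := leq_trans tL L_le.
  rewrite (bigD1 (Ordinal tshL)) //= subnK // td eqxx mul1r big1 ?addr0 //.
  move=> r r_neq; case: ifP => [/andP[_ /eqP tE]|]; last by rewrite mul0r.
  by move: r_neq; rewrite -val_eqE /= tE addnK eqxx.
rewrite big1 // => r _; case: ifP => [/andP[_ /eqP tE]|]; last by rewrite mul0r.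
by move: t_out; rewrite tE leq_addl ltn_add2r ltn_ord.
Qed.
End Windows.

Lemma entry_eta d s t : entry (eta d s) t = if (t < d.-1)%N then w d.-1 ^+ (s * t) else 0.
Proof.
rewrite (@entry_window d d.-1 0 (fun r => w d.-1 ^+ (s * r)) id) ?addn0 ?subn0 ?leq_pred //.
by move=> r; rewrite addn0.
Qed.

Lemma entry_xi d s t : (0 < d)%N ->
  entry (xi d s) t = if (0 < t < d)%N then w d.-1 ^+ (s * t.-1) else 0.
Proof.
move=> d_gt0.
rewrite (@entry_window d d.-1 1 (fun r => w d.-1 ^+ (s * r)) S) ?addn1 ?subn1 ?prednK //.
by move=> r; rewrite addn1.
Qed.

Lemma entry_beta d s t : (1 < d)%N ->
  entry (beta d s) t = if (0 < t < d.-1)%N then w d.-2 ^+ (s * t.-1) else 0.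
Proof.
move=> d_gt1; rewrite (@entry_window d d.-2 1 (fun r => w d.-2 ^+ (s * r)) S) ?addn1 ?subn1.
- by have -> : d.-2.+1 = d.-1 by lia.
- by [].
- by move=> r; rewrite addn1.
- by lia.
Qed.

Lemma entry_ones d t : entry (allones d) t = if (t < d)%N then 1 else 0.
Proof.
rewrite (@entry_window d d 0 (fun=> 1) id) ?addn0 ?subn0 //.
- by move=> x; apply: eq_bigr => r _; rewrite mul1r.
- by move=> r; rewrite addn0.
Qed.

Lemma dot_eta d s a : dot (eta d s) a = dft d.-1 (entry a) s.
Proof. exact: (@dot_window d d.-1 (fun r => w d.-1 ^+ (s * r)) id). Qed.

Lemma dot_xi d s a : dot (xi d s) a = dft d.-1 (fun t => entry a t.+1) s.
Proof. exact: (@dot_window d d.-1 (fun r => w d.-1 ^+ (s * r)) S). Qed.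

Lemma dot_beta d s a : dot (beta d s) a = dft d.-2 (fun t => entry a t.+1) s.
Proof. exact: (@dot_window d d.-2 (fun r => w d.-2 ^+ (s * r)) S). Qed.

Lemma dot_ones d a : dot (allones d) a = \sum_(t < d) entry a t.
Proof.
rewrite (@dot_window d d (fun=> 1) id) => [|x]; last by apply: eq_bigr => r _; rewrite mul1r.
by apply: eq_bigr => t _; rewrite conjC1 mul1r.
Qed.

Lemma entry_ord d (a : 'I_d -> CC) (x : 'I_d) : entry a x = a x.
Proof.
rewrite /entry (bigD1 x) //= /ket eqxx mul1r big1 ?addr0 // => y y_neq_x.
by rewrite ifN ?mul0r //; apply: contra y_neq_x => /eqP yx; apply/eqP/val_inj.
Qed.

Section LocalDots.
Variable d : nat.
Hypothesis d_gt2 : (2 < d)%N.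

Local Notation ket0 := (ket d 0).
Local Notation ketl := (ket d d.-1).

Let d1_gt0 : (0 < d.-1)%N. Proof. by lia. Qed.
Let d2_gt0 : (0 < d.-2)%N. Proof. by lia. Qed.

Lemma dot_ket0_ket0 : dot ket0 ket0 = 1.
Proof. by rewrite dot_ket entry_ket ifT //; lia. Qed.
Lemma dot_ketl_ketl : dot ketl ketl = 1.
Proof. by rewrite dot_ket entry_ket ifT //; lia. Qed.
Lemma dot_ket0_ketl : dot ket0 ketl = 0.
Proof. by rewrite dot_ket entry_ket ifF //; lia. Qed.
Lemma dot_ketl_ket0 : dot ketl ket0 = 0.
Proof. by rewrite dot_ket entry_ket ifF //; lia. Qed.
Lemma dot_ket0_xi s : dot ket0 (xi d s) = 0.
Proof. by rewrite dot_ket entry_xi //; lia. Qed.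
Lemma dot_ket0_beta s : dot ket0 (beta d s) = 0.
Proof. by rewrite dot_ket entry_beta //; lia. Qed.
Lemma dot_ketl_eta s : dot ketl (eta d s) = 0.
Proof. by rewrite dot_ket entry_eta ltnn. Qed.
Lemma dot_ketl_beta s : dot ketl (beta d s) = 0.
Proof. by rewrite dot_ket entry_beta ?ltnn ?andbF //; lia. Qed.

Lemma dot_xi_ket0 s : dot (xi d s) ket0 = 0.
Proof. by rewrite dotC dot_ket0_xi conjC0. Qed.
Lemma dot_beta_ket0 s : dot (beta d s) ket0 = 0.
Proof. by rewrite dotC dot_ket0_beta conjC0. Qed.
Lemma dot_eta_ketl s : dot (eta d s) ketl = 0.
Proof. by rewrite dotC dot_ketl_eta conjC0. Qed.
Lemma dot_beta_ketl s : dot (beta d s) ketl = 0.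
Proof. by rewrite dotC dot_ketl_beta conjC0. Qed.

Lemma dot_xi_xi s s' : (s < d.-1)%N -> (s' < d.-1)%N ->
  dot (xi d s) (xi d s') = if s == s' then d.-1%:R else 0.
Proof.
move=> sd s'd; rewrite dot_xi -(dft_w d1_gt0 sd s'd); apply: eq_dft => t td.
by rewrite entry_xi ?ifT //; lia.
Qed.
Lemma dot_eta_eta s s' : (s < d.-1)%N -> (s' < d.-1)%N ->
  dot (eta d s) (eta d s') = if s == s' then d.-1%:R else 0.
Proof.
move=> sd s'd; rewrite dot_eta -(dft_w d1_gt0 sd s'd); apply: eq_dft => t td.
by rewrite entry_eta ifT.
Qed.
Lemma dot_beta_beta s s' : (s < d.-2)%N -> (s' < d.-2)%N ->
  dot (beta d s) (beta d s') = if s == s' then d.-2%:R else 0.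
Proof.
move=> sd s'd; rewrite dot_beta -(dft_w d2_gt0 sd s'd); apply: eq_dft => t td.
by rewrite entry_beta ?ifT //; lia.
Qed.

Lemma dot_xi_ones s : (s < d.-1)%N ->
  dot (xi d s) (allones d) = if s == 0%N then d.-1%:R else 0.
Proof.
move=> sd; rewrite dot_xi -(dft1 d1_gt0 sd); apply: eq_dft => t td.
by rewrite entry_ones ifT //; lia.
Qed.
Lemma dot_eta_ones s : (s < d.-1)%N ->
  dot (eta d s) (allones d) = if s == 0%N then d.-1%:R else 0.
Proof.
move=> sd; rewrite dot_eta -(dft1 d1_gt0 sd); apply: eq_dft => t td.
by rewrite entry_ones ifT //; lia.
Qed.
Lemma dot_beta_ones s : (s < d.-2)%N ->
  dot (beta d s) (allones d) = if s == 0%N then d.-2%:R else 0.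
Proof.
move=> sd; rewrite dot_beta -(dft1 d2_gt0 sd); apply: eq_dft => t td.
by rewrite entry_ones ifT //; lia.
Qed.

Let conj_if_nat (b : bool) k : (if b then k%:R else 0 : CC)^* = if b then k%:R else 0.
Proof. by case: b; rewrite ?conjC_nat ?conjC0. Qed.

Lemma dot_ones_xi s : (s < d.-1)%N ->
  dot (allones d) (xi d s) = if s == 0%N then d.-1%:R else 0.
Proof. by move=> sd; rewrite dotC dot_xi_ones // conj_if_nat. Qed.
Lemma dot_ones_eta s : (s < d.-1)%N ->
  dot (allones d) (eta d s) = if s == 0%N then d.-1%:R else 0.
Proof. by move=> sd; rewrite dotC dot_eta_ones // conj_if_nat. Qed.
Lemma dot_ones_beta s : (s < d.-2)%N ->
  dot (allones d) (beta d s) = if s == 0%N then d.-2%:R else 0.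
Proof. by move=> sd; rewrite dotC dot_beta_ones // conj_if_nat. Qed.

Lemma dot_ket0_ones : dot ket0 (allones d) = 1.
Proof. by rewrite dot_ket entry_ones ifT //; lia. Qed.
Lemma dot_ketl_ones : dot ketl (allones d) = 1.
Proof. by rewrite dot_ket entry_ones ifT //; lia. Qed.
Lemma dot_ones_ket0 : dot (allones d) ket0 = 1.
Proof. by rewrite dotC dot_ket0_ones conjC1. Qed.
Lemma dot_ones_ketl : dot (allones d) ketl = 1.
Proof. by rewrite dotC dot_ketl_ones conjC1. Qed.
Lemma dot_ones_ones : dot (allones d) (allones d) = d%:R.
Proof.
rewrite dot_ones (eq_bigr (fun=> 1)) ?sumr_const ?card_ord // => t _.
by rewrite entry_ones ltn_ord.
Qed.
End LocalDots.

Ltac dot_simpl :=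
  rewrite ?dot_ket0_ket0 ?dot_ketl_ketl ?dot_ket0_ketl ?dot_ketl_ket0 ?dot_ket0_xi ?dot_xi_ket0
    ?dot_ket0_beta ?dot_beta_ket0 ?dot_ketl_eta ?dot_eta_ketl ?dot_ketl_beta ?dot_beta_ketl
    ?dot_xi_xi ?dot_eta_eta ?dot_beta_beta ?dot_xi_ones ?dot_eta_ones ?dot_beta_ones
    ?dot_ones_xi ?dot_ones_eta ?dot_ones_beta ?dot_ket0_ones ?dot_ketl_ones ?dot_ones_ket0
    ?dot_ones_ketl ?dot_ones_ones ?mulr0 ?mul0r //; try lia.

Lemma inner_prod3 m n p (a a' : 'I_m -> CC) (b b' : 'I_n -> CC) (c c' : 'I_p -> CC) :
  inner (prod3 a b c) (prod3 a' b' c') = dot a a' * dot b b' * dot c c'.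
Proof.
rewrite /inner /dot; transitivity (\sum_(i : 'I_m) \sum_(j : 'I_n) \sum_(k : 'I_p)
   ((a i)^* * a' i) * ((b j)^* * b' j) * ((c k)^* * c' k)).
  rewrite pair_bigA pair_bigA /=; apply: eq_bigr => -[[i j] k] _; rewrite !ffunE /=.
  by rewrite !rmorphM /= mulrACA [X in X * _]mulrACA.
symmetry; rewrite !mulr_suml; apply: eq_bigr => i _.
rewrite [_ * (\sum_(x < n) _)]mulr_sumr mulr_suml; apply: eq_bigr => j _.
by rewrite mulr_sumr.
Qed.

Lemma innerC m n p (u v : tri m n p) : inner u v = (inner v u)^*.
Proof. by rewrite /inner rmorph_sum; apply: eq_bigr => x _; rewrite rmorphM /= conjCK mulrC. Qed.

Lemma innerBr m n p (u v v' : tri m n p) : inner u (v - v') = inner u v - inner u v'.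
Proof. by rewrite /inner -sumrB; apply: eq_bigr => x _; rewrite !ffunE mulrBr. Qed.

Lemma innerBl m n p (u u' v : tri m n p) : inner (u - u') v = inner u v - inner u' v.
Proof. by rewrite innerC innerBr rmorphB /= -!innerC. Qed.

Lemma spans_all_orth {m n p} {U : seq (tri m n p)} {v} :
  spans_all U -> (forall u, u \in U -> inner u v = 0) -> inner v v = 0.
Proof.
move=> /(_ v)[coef vE] v_orth; transitivity (\sum_(i < size U) coef i * inner v (nth v U i)).
  rewrite /inner; under eq_bigr => x _ do rewrite {2}vE mulr_sumr.
  rewrite exchange_big; apply: eq_bigr => i _; rewrite mulr_sumr.
  by apply: eq_bigr => x _; rewrite mulrCA.
by rewrite big1 // => i _; rewrite innerC v_orth ?conjC0 ?mulr0 // mem_nth.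
Qed.

Lemma mem_allpairs_pair (S T : eqType) (s : seq S) (t : seq T) x y :
  ((x, y) \in [seq (a, b) | a <- s, b <- t]) = (x \in s) && (y \in t).
Proof.
by apply/allpairsP/andP => [[[a b] [/= ? ? [-> ->]]] | [? ?]] //; exists (x, y).
Qed.

Lemma uniq_allpairs_pair (S T : eqType) (s : seq S) (t : seq T) :
  uniq s -> uniq t -> uniq [seq (a, b) | a <- s, b <- t].
Proof. by move=> us ut; apply: allpairs_uniq => // -[? ?] [? ?]. Qed.

Lemma mem_pairs0 a b i k :
  ((i, k) \in pairs0 a b) = [&& (i < a)%N, (k < b)%N & (i != 0%N) || (k != 0%N)].
Proof.
rewrite mem_filter mem_allpairs_pair !mem_iota /= !add0n xpair_eqE negb_and.
by rewrite andbC -andbA.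
Qed.

Lemma mem_triples0 a b c i j k : (((i, j), k) \in triples0 a b c) =
  [&& (i < a)%N, (j < b)%N, (k < c)%N & [|| i != 0%N, j != 0%N | k != 0%N]].
Proof.
rewrite mem_filter !mem_allpairs_pair !mem_iota /= !add0n !xpair_eqE !negb_and.
by rewrite -orbA andbC -!andbA.
Qed.

Lemma uniq_pairs0 a b : uniq (pairs0 a b).
Proof. by rewrite filter_uniq // uniq_allpairs_pair ?iota_uniq. Qed.

Lemma uniq_triples0 a b c : uniq (triples0 a b c).
Proof. by rewrite filter_uniq // !uniq_allpairs_pair ?iota_uniq. Qed.

Lemma size_pairs0 a b : (0 < a)%N -> (0 < b)%N -> size (pairs0 a b) = (a * b).-1.
Proof.
move=> a_gt0 b_gt0; rewrite size_filter.
set s := [seq (i, k) | i <- _, k <- _].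
have := count_predC (pred1 (0, 0)%N) s.
rewrite count_uniq_mem ?uniq_allpairs_pair ?iota_uniq // mem_allpairs_pair !mem_iota /=.
by rewrite a_gt0 b_gt0 size_allpairs !size_iota add1n => <-.
Qed.

Lemma size_triples0 a b c : (0 < a)%N -> (0 < b)%N -> (0 < c)%N ->
  size (triples0 a b c) = (a * b * c).-1.
Proof.
move=> a_gt0 b_gt0 c_gt0; rewrite size_filter.
set s := [seq (ij, k) | ij <- _, k <- _].
have := count_predC (pred1 ((0, 0), 0)%N) s.
rewrite count_uniq_mem ?uniq_allpairs_pair ?iota_uniq // !mem_allpairs_pair !mem_iota /=.
by rewrite a_gt0 b_gt0 c_gt0 !size_allpairs !size_iota add1n => <-.
Qed.

Inductive family := famA1 | famA2 | famA3 | famB1 | famB2 | famB3 | famF | famS.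
Scheme Equality for family.
HB.instance Definition _ := comparableMixin family_eq_dec.

(* [(f, i, j, k)] labels the member of family [f] with Fourier indices [i], [j], [k] on parties
   A, B, C; indices that the family does not use are [0]. *)
Definition label := (family * nat * nat * nat)%type.

Definition member dA dB dC (l : label) : tri dA dB dC :=
  let: (f, i, j, k) := l in
  match f with
  | famA1 => prod3 (xi dA i) (ket dB 0) (eta dC k)
  | famA2 => prod3 (xi dA i) (eta dB j) (ket dC dC.-1)
  | famA3 => prod3 (ket dA dA.-1) (xi dB j) (eta dC k)
  | famB1 => prod3 (eta dA i) (ket dB dB.-1) (xi dC k)
  | famB2 => prod3 (eta dA i) (xi dB j) (ket dC 0)
  | famB3 => prod3 (ket dA 0) (eta dB j) (xi dC k)
  | famF => prod3 (beta dA i) (beta dB j) (beta dC k)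
  | famS => stopper dA dB dC
  end.

Definition in_range dA dB dC (l : label) : bool :=
  let: (f, i, j, k) := l in
  match f with
  | famA1 | famB1 => [&& i < dA.-1, j == 0 & k < dC.-1]
  | famA2 | famB2 => [&& i < dA.-1, j < dB.-1 & k == 0]
  | famA3 | famB3 => [&& i == 0, j < dB.-1 & k < dC.-1]
  | famF => [&& i < dA.-2, j < dB.-2 & k < dC.-2]
  | famS => [&& i == 0, j == 0 & k == 0]
  end%N.

Definition nontrivial (l : label) : bool :=
  let: (f, i, j, k) := l in [|| f == famS, i != 0, j != 0 | k != 0]%N.

Definition labelIK f (q : nat * nat) : label := (f, q.1, 0, q.2)%N.
Definition labelIJ f (q : nat * nat) : label := (f, q.1, q.2, 0)%N.
Definition labelJK f (q : nat * nat) : label := (f, 0, q.1, q.2)%N.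
Definition labelF (q : nat * nat * nat) : label := (famF, q.1.1, q.1.2, q.2).

Definition labels dA dB dC : seq label :=
  map (labelIK famA1) (pairs0 dA.-1 dC.-1) ++ map (labelIJ famA2) (pairs0 dA.-1 dB.-1) ++
  map (labelJK famA3) (pairs0 dB.-1 dC.-1) ++ map (labelIK famB1) (pairs0 dA.-1 dC.-1) ++
  map (labelIJ famB2) (pairs0 dA.-1 dB.-1) ++ map (labelJK famB3) (pairs0 dB.-1 dC.-1) ++
  map labelF (triples0 dA.-2 dB.-2 dC.-2) ++ [:: (famS, 0, 0, 0)%N].

Lemma UU_labels dA dB dC : UU dA dB dC = map (member dA dB dC) (labels dA dB dC).
Proof. by rewrite /UU /labels !map_cat -!map_comp. Qed.

Lemma mem_map_cancel {S T : eqType} {g : S -> T} {r : T -> S} :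
  cancel g r -> forall s y, (y \in map g s) = (g (r y) == y) && (r y \in s).
Proof.
move=> gK s y; apply/mapP/andP => [[x xs ->]|[/eqP yE ys]]; first by rewrite gK eqxx.
by exists (r y); rewrite ?yE.
Qed.

Lemma labelIKK f : cancel (labelIK f) (fun l => (l.1.1.2, l.2)). Proof. by case. Qed.
Lemma labelIJK f : cancel (labelIJ f) (fun l => (l.1.1.2, l.1.2)). Proof. by case. Qed.
Lemma labelJKK f : cancel (labelJK f) (fun l => (l.1.2, l.2)). Proof. by case. Qed.
Lemma labelFK : cancel labelF (fun l => (l.1.1.2, l.1.2, l.2)). Proof. by case=> [[]]. Qed.

Lemma mem_labels dA dB dC l :
  (l \in labels dA dB dC) = in_range dA dB dC l && nontrivial l.
Proof.
case: l => [[[f i] j] k]; rewrite !mem_cat !inE.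
rewrite !(mem_map_cancel (labelIKK _)) !(mem_map_cancel (labelIJK _)).
rewrite !(mem_map_cancel (labelJKK _)) (mem_map_cancel labelFK) /= !mem_pairs0 mem_triples0.
by case: f; case: i => [|i]; case: j => [|j]; case: k => [|k];
  rewrite /labelIK /labelIJ /labelJK ?xpair_eqE /= ?eqxx ?andbT ?andbF ?orbT ?orbF.
Qed.

Lemma uniq_labels dA dB dC : uniq (labels dA dB dC).
Proof.
have cat_family f (s1 s2 : seq label) : uniq s1 -> all (fun l => l.1.1.1 == f) s1 ->
    all (fun l => l.1.1.1 != f) s2 -> uniq s2 -> uniq (s1 ++ s2).
  move=> u1 f1 f2 u2; rewrite cat_uniq u1 u2 andbT; apply/hasPn => l /(allP f2) l_f.
  by apply: contraNN l_f => /(allP f1).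
rewrite /labels; apply: (cat_family famA1); last apply: (cat_family famA2);
  last apply: (cat_family famA3); last apply: (cat_family famB1);
  last apply: (cat_family famB2); last apply: (cat_family famB3); last apply: (cat_family famF).
all: rewrite ?all_cat ?all_map //=; repeat (apply/andP; split); try by [|apply/allP].
all: rewrite map_inj_uniq ?uniq_pairs0 ?uniq_triples0 //; apply: can_inj.
all: by [apply: labelIKK | apply: labelIJK | apply: labelJKK | apply: labelFK].
Qed.

Lemma size_labels dA dB dC : (2 < dA)%N -> (2 < dB)%N -> (2 < dC)%N ->
  size (labels dA dB dC) = (dA * dB * dC - 8)%N.
Proof.
move=> dA_gt2 dB_gt2 dC_gt2.
by rewrite /labels !size_cat !size_map /= !size_pairs0 ?size_triples0; lia.
Qed.

Record shape := Shape {
  head0 : bool; last0 : bool; mid0 : bool; head_mid : bool; last_mid : bool; mid_flat : bool }.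

Definition shape_of d (X : nat -> CC) : shape :=
  Shape (X 0%N == 0) (X d.-1 == 0) (X 1%N == 0) (X 0%N == X 1%N) (X d.-1 == X 1%N)
    [forall t : 'I_d.-2, X t.+1 == X 1%N].

Definition mid_zero s := mid_flat s && mid0 s.
Definition tail_zero s := mid_zero s && last0 s.
Definition init_zero s := head0 s && mid_zero s.
Definition tail_flat s := mid_flat s && last_mid s.
Definition init_flat s := mid_flat s && head_mid s.
Definition nonzero s := ~~ [&& head0 s, mid_zero s & last0 s].
Definition coherent s :=
  [&& head0 s && mid0 s ==> head_mid s, head0 s && head_mid s ==> mid0 s,
      mid0 s && head_mid s ==> head0 s, last0 s && mid0 s ==> last_mid s,
      last0 s && last_mid s ==> mid0 s & mid0 s && last_mid s ==> last0 s].
Definition sum_nonzero s := [&& mid_flat s, nonzero s &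
  ((head0 s || head_mid s) && (last0 s || last_mid s)) || (mid0 s && (head0 s || last0 s))].
Definition block_flat y z := [|| tail_zero y, init_zero z | tail_flat y && init_flat z].

Lemma sum_ord_split (X : nat -> CC) d : (1 < d)%N ->
  \sum_(t < d) X t = X 0%N + \sum_(t < d.-2) X t.+1 + X d.-1.
Proof.
move=> d_gt1; have dE : d = d.-2.+2 by lia.
by rewrite dE big_ord_recl big_ord_recr /= addrA.
Qed.

Section ShapeOf.
Context {d : nat} {X : nat -> CC} (d_gt2 : (2 < d)%N).

Local Notation s := (shape_of d X).

Lemma coherent_shape : coherent s.
Proof.
by rewrite /coherent /=; do ![apply/andP; split]; apply/implyP => /andP[/eqP-> /eqP->].
Qed.

Lemma mid_flatP : reflect (const_on d.-2 (fun t => X t.+1)) (mid_flat s).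
Proof.
apply: (iffP forallP) => [flat t td|flat t]; first exact/eqP/(flat (Ordinal td)).
by rewrite flat.
Qed.

Lemma mid_zero_shape : zero_on d.-2 (fun t => X t.+1) -> mid_zero s.
Proof.
move=> zero; have X1 : X 1%N = 0 by apply: zero; lia.
apply/andP; split; last by rewrite /= X1.
by apply/mid_flatP => t td; rewrite zero ?X1.
Qed.

Lemma tail_zero_shape : zero_on d.-1 (fun t => X t.+1) -> tail_zero s.
Proof.
move=> zero; rewrite /tail_zero mid_zero_shape => [|t td]; last by apply: zero; lia.
by rewrite /= (_ : d.-1 = d.-2.+1) ?zero //; lia.
Qed.

Lemma init_zero_shape : zero_on d.-1 X -> init_zero s.
Proof.
move=> zero; rewrite /init_zero mid_zero_shape => [|t td]; last by apply: zero; lia.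
by rewrite /= zero ?eqxx //; lia.
Qed.

Lemma tail_flat_shape : const_on d.-1 (fun t => X t.+1) -> tail_flat s.
Proof.
move=> flat; apply/andP; split; first by apply/mid_flatP => t td; rewrite flat //; lia.
by rewrite /= (_ : d.-1 = d.-2.+1) ?flat //; lia.
Qed.

Lemma init_flat_shape : const_on d.-1 X -> init_flat s.
Proof.
move=> flat; have X1 : X 1%N = X 0%N by apply: flat; lia.
apply/andP; split; last by rewrite /= X1.
by apply/mid_flatP => t td; rewrite !flat //; lia.
Qed.

Lemma nonzero_shape t : (t < d)%N -> X t != 0 -> nonzero s.
Proof.
move=> td; apply: contraNN; rewrite /mid_zero /=.
case/and3P=> /eqP X0 /andP[/mid_flatP flat /eqP X1] /eqP Xl.
case: t td => [|t] td; first by rewrite X0.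
have [tl|] := ltnP t d.-2; first by rewrite flat // X1.
by move=> lt; rewrite (_ : t.+1 = d.-1) ?Xl //; lia.
Qed.

Lemma sum_nonzero_shape : sum_nonzero s -> \sum_(t < d) X t != 0.
Proof.
case/and3P=> mf nz ends; have flat := elimT mid_flatP mf.
rewrite sum_ord_split; last by lia.
rewrite (eq_bigr (fun=> X 1%N)) => [|t td]; last exact: flat.
rewrite sumr_const card_ord -mulr_natl.
move: nz ends; rewrite /nonzero /mid_zero mf /=.
have [X1|X1] := eqVneq (X 1%N) 0.
  rewrite X1 mulr0 addr0.
  by case: (eqVneq (X 0%N) 0) => [->|X0]; case: (eqVneq (X d.-1) 0) => [->|Xl];
    rewrite ?add0r ?addr0.
rewrite andbF orbF => _ /andP[e0 el].
have [n0 ->] : exists n0 : nat, X 0%N = n0%:R * X 1%N.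
  by case/orP: e0 => /eqP->; [exists 0%N; rewrite mul0r | exists 1%N; rewrite mul1r].
have [nl ->] : exists nl : nat, X d.-1 = nl%:R * X 1%N.
  by case/orP: el => /eqP->; [exists 0%N; rewrite mul0r | exists 1%N; rewrite mul1r].
by rewrite -!mulrDl -!natrD mulf_neq0 // pnatr_eq0; lia.
Qed.
End ShapeOf.

Definition all_bool (P : bool -> bool) := P true && P false.
Definition all_shapes (P : shape -> bool) :=
  all_bool (fun b1 => all_bool (fun b2 => all_bool (fun b3 =>
  all_bool (fun b4 => all_bool (fun b5 => all_bool (fun b6 => P (Shape b1 b2 b3 b4 b5 b6))))))).

Lemma all_boolP {P} : all_bool P -> forall b, P b.
Proof. by case/andP => ? ? []. Qed.

Lemma all_shapesP {P} : all_shapes P -> forall s, P s.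
Proof.
move=> + [b1 b2 b3 b4 b5 b6].
by move=> /all_boolP/(_ b1)/all_boolP/(_ b2)/all_boolP/(_ b3)/all_boolP/(_ b4)
  /all_boolP/(_ b5)/all_boolP/(_ b6).
Qed.

Lemma shapes_sum_nonzero {a b c} :
  coherent a -> coherent b -> coherent c -> nonzero a -> nonzero b -> nonzero c ->
  head0 b || block_flat a c -> last0 c || block_flat a b -> last0 a || block_flat b c ->
  last0 b || block_flat c a -> head0 c || block_flat b a -> head0 a || block_flat c b ->
  [|| mid_zero a, mid_zero b, mid_zero c | [&& mid_flat a, mid_flat b & mid_flat c]] ->
  [&& sum_nonzero a, sum_nonzero b & sum_nonzero c].
Proof.
have check : all_shapes (fun a => all_shapes (fun b => all_shapes (fun c =>
  [==> coherent a, coherent b, coherent c, nonzero a, nonzero b, nonzero c,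
       head0 b || block_flat a c, last0 c || block_flat a b, last0 a || block_flat b c,
       last0 b || block_flat c a, head0 c || block_flat b a, head0 a || block_flat c b,
       [|| mid_zero a, mid_zero b, mid_zero c | [&& mid_flat a, mid_flat b & mid_flat c]]
     => [&& sum_nonzero a, sum_nonzero b & sum_nonzero c]]))).
  by vm_compute.
move: (all_shapesP (all_shapesP (all_shapesP check a) b) c).
by do 13 move=> /implyP/[apply].
Qed.

Lemma zero_or_block_flat m p (x : CC) (y : 'I_m -> CC) (z : 'I_p -> CC) :
  (2 < m)%N -> (2 < p)%N ->
  (forall i k, (i < m.-1)%N -> (k < p.-1)%N -> (i != 0%N) || (k != 0%N) ->
     x * (dot (xi m i) y * dot (eta p k) z) = 0) ->
  (x == 0) || block_flat (shape_of m (entry y)) (shape_of p (entry z)).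
Proof.
move=> m_gt2 p_gt2 orth; have [//|x_neq0] /= := eqVneq x 0.
have dft0 i k : (i < m.-1)%N -> (k < p.-1)%N -> (i != 0%N) || (k != 0%N) ->
    dft m.-1 (fun t => entry y t.+1) i * dft p.-1 (entry z) k = 0.
  move=> im kp ik; apply/eqP; have /eqP := orth i k im kp ik.
  by rewrite dot_xi dot_eta mulf_eq0 (negbTE x_neq0).
have m1_gt0 : (0 < m.-1)%N by lia.
have p1_gt0 : (0 < p.-1)%N by lia.
apply/or3P; have [zy|zz|[cy cz]] := dft_prod2_origin m1_gt0 p1_gt0 dft0.
- exact/Or31/(tail_zero_shape m_gt2).
- exact/Or32/(init_zero_shape p_gt2).
- by apply/Or33/andP; split; [apply: tail_flat_shape | apply: init_flat_shape].
Qed.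

Lemma mid_zero_or_flat dA dB dC (a : 'I_dA -> CC) (b : 'I_dB -> CC) (c : 'I_dC -> CC) :
  (2 < dA)%N -> (2 < dB)%N -> (2 < dC)%N ->
  (forall i j k, (i < dA.-2)%N -> (j < dB.-2)%N -> (k < dC.-2)%N ->
     [|| i != 0%N, j != 0%N | k != 0%N] ->
     dot (beta dA i) a * dot (beta dB j) b * dot (beta dC k) c = 0) ->
  [|| mid_zero (shape_of dA (entry a)), mid_zero (shape_of dB (entry b)),
      mid_zero (shape_of dC (entry c))
    | [&& mid_flat (shape_of dA (entry a)), mid_flat (shape_of dB (entry b))
        & mid_flat (shape_of dC (entry c))]].
Proof.
move=> dA_gt2 dB_gt2 dC_gt2 orth.
have dA2 : (0 < dA.-2)%N by lia.
have dB2 : (0 < dB.-2)%N by lia.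
have dC2 : (0 < dC.-2)%N by lia.
have dft0 i j k : (i < dA.-2)%N -> (j < dB.-2)%N -> (k < dC.-2)%N ->
    [|| i != 0%N, j != 0%N | k != 0%N] ->
    dft dA.-2 (fun t => entry a t.+1) i * dft dB.-2 (fun t => entry b t.+1) j *
    dft dC.-2 (fun t => entry c t.+1) k = 0.
  by move=> *; rewrite -!dot_beta orth.
apply/or4P; have [za|zb|zc|[fa fb fc]] := dft_prod3_origin dA2 dB2 dC2 dft0.
- exact/Or41/(mid_zero_shape dA_gt2).
- exact/Or42/(mid_zero_shape dB_gt2).
- exact/Or43/(mid_zero_shape dC_gt2).
- by apply/Or44/and3P; split; apply/mid_flatP.
Qed.

Lemma prod3_neq0 m n p (a : 'I_m -> CC) (b : 'I_n -> CC) (c : 'I_p -> CC) :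
  prod3 a b c != 0 -> exists x y z, [/\ a x != 0, b y != 0 & c z != 0].
Proof.
case: (pickP (fun v => prod3 a b c v != 0)) => [[[x y] z]|all0] abc; last first.
  by case/eqP: abc; apply/ffunP => v; move/negbFE/eqP: (all0 v) ->; rewrite ffunE.
by exists x, y, z; move: abc; rewrite ffunE /= !mulf_eq0 !negb_or => /andP[/andP[]].
Qed.

Section UPB.
Variables dA dB dC : nat.
Hypotheses (dA_gt2 : (2 < dA)%N) (dB_gt2 : (2 < dB)%N) (dC_gt2 : (2 < dC)%N).

Local Notation member := (member dA dB dC).
Local Notation labels := (labels dA dB dC).
Local Notation in_range := (in_range dA dB dC).

Lemma inner_member_neq0 l : in_range l -> inner (member l) (member l) != 0.
Proof.
case: l => [[[f i] j] k]; case: f => /= /and3P[? ? ?]; rewrite /stopper inner_prod3; dot_simpl.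
all: rewrite ?eqxx; repeat apply: mulf_neq0; rewrite ?oner_neq0 // pnatr_eq0; lia.
Qed.

Lemma inner_member_orth l l' : in_range l -> in_range l' -> l != l' ->
  (l.1.1.1 == famS -> nontrivial l') -> (l'.1.1.1 == famS -> nontrivial l) ->
  inner (member l) (member l') = 0.
Proof.
case: l => [[[f i] j] k]; case: l' => [[[f' i'] j'] k'].
case: f; case: f' => /= /and3P[? ? ?] /and3P[? ? ?] l_neq nt nt';
  rewrite /stopper inner_prod3; dot_simpl.
all: repeat match goal with H : is_true (_ == _) |- _ => move/eqP in H; subst end.
all: move: l_neq nt nt'; repeat (case: eqP => [?|?]; subst => //=); rewrite ?mulr0 ?mul0r //.
all: by move=> _ nt nt'; first [have := nt isT | have := nt' isT].
Qed.

Section Overlap.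
Variables (a : 'I_dA -> CC) (b : 'I_dB -> CC) (c : 'I_dC -> CC).
Hypothesis orth :
  forall l, in_range l -> nontrivial l -> l.1.1.1 != famS -> inner (member l) (prod3 a b c) = 0.

Local Notation sA := (shape_of dA (entry a)).
Local Notation sB := (shape_of dB (entry b)).
Local Notation sC := (shape_of dC (entry c)).

Lemma A_constraints :
  [/\ head0 sB || block_flat sA sC, last0 sC || block_flat sA sB & last0 sA || block_flat sB sC].
Proof.
split; apply: zero_or_block_flat => // i k hi hk hik; rewrite -dot_ket.
- by rewrite -(orth (famA1, i, 0, k)%N) /= ?hi ?hk ?hik // inner_prod3 mulrCA mulrA.
- by rewrite -(orth (famA2, i, k, 0)%N) /= ?hi ?hk ?orbF ?hik // inner_prod3 mulrC.
- by rewrite -(orth (famA3, 0, i, k)%N) /= ?hi ?hk ?hik // inner_prod3 mulrA.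
Qed.

Lemma B_constraints :
  [/\ last0 sB || block_flat sC sA, head0 sC || block_flat sB sA & head0 sA || block_flat sC sB].
Proof.
split; apply: zero_or_block_flat => // k i hk hi hki; rewrite -dot_ket.
- rewrite -(orth (famB1, i, 0, k)%N) /= ?hi ?hk 1?orbC ?hki // inner_prod3.
  by rewrite [_ * dot (eta _ _) _]mulrC mulrCA mulrA.
- rewrite -(orth (famB2, i, k, 0)%N) /= ?hi ?hk ?orbF 1?orbC ?hki // inner_prod3.
  by rewrite mulrC [dot (xi _ _) _ * _]mulrC.
- rewrite -(orth (famB3, 0, i, k)%N) /= ?hi ?hk 1?orbC ?hki // inner_prod3.
  by rewrite [dot (xi _ _) _ * _]mulrC mulrA.
Qed.

Lemma F_constraint :
  [|| mid_zero sA, mid_zero sB, mid_zero sC | [&& mid_flat sA, mid_flat sB & mid_flat sC]].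
Proof.
apply: mid_zero_or_flat => // i j k hi hj hk hijk.
by rewrite -inner_prod3; apply: (orth (famF, i, j, k)%N); rewrite /= ?hi ?hj ?hk.
Qed.

Lemma stopper_overlap : prod3 a b c != 0 -> inner (stopper dA dB dC) (prod3 a b c) != 0.
Proof.
move=> /prod3_neq0[x [y [z [ax_neq0 by_neq0 cz_neq0]]]].
have nzA : nonzero sA by apply: (nonzero_shape dA_gt2 _ (ltn_ord x)); rewrite entry_ord.
have nzB : nonzero sB by apply: (nonzero_shape dB_gt2 _ (ltn_ord y)); rewrite entry_ord.
have nzC : nonzero sC by apply: (nonzero_shape dC_gt2 _ (ltn_ord z)); rewrite entry_ord.
have [A1 A2 A3] := A_constraints; have [B1 B2 B3] := B_constraints.
have := shapes_sum_nonzero coherent_shape coherent_shape coherent_shape nzA nzB nzC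
  A1 A2 A3 B1 B2 B3 F_constraint.
case/and3P=> /(sum_nonzero_shape dA_gt2) sumA /(sum_nonzero_shape dB_gt2) sumB
  /(sum_nonzero_shape dC_gt2) sumC.
by rewrite /stopper inner_prod3 !dot_ones !mulf_neq0.
Qed.
End Overlap.

Lemma member_neq0 l : in_range l -> member l != 0.
Proof.
move=> l_range; have := inner_member_neq0 _ l_range.
by apply: contraNneq => ->; rewrite /inner big1 // => x _; rewrite ffunE mulr0.
Qed.

Lemma labels_orth l l' :
  l \in labels -> l' \in labels -> l != l' -> inner (member l) (member l') = 0.
Proof.
rewrite !mem_labels => /andP[l_range l_nt] /andP[l'_range l'_nt] l_neq.
exact: inner_member_orth.
Qed.

Lemma uniq_UU : uniq (UU dA dB dC).
Proof.
rewrite UU_labels map_inj_in_uniq ?uniq_labels // => l l' l_in l'_in ll'.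
apply/eqP; apply: contraT => l_neq; move: (l_in); rewrite mem_labels => /andP[l_range _].
by have := inner_member_neq0 _ l_range; rewrite {2}ll' labels_orth ?eqxx.
Qed.

Lemma UU_product_states u : u \in UU dA dB dC -> product_state u.
Proof.
rewrite UU_labels => /mapP[l]; rewrite mem_labels => /andP[l_range _] ->.
split; first exact: member_neq0.
by case: l {l_range} => [[[[] i] j] k]; do 3 eexists.
Qed.

Lemma UU_orthogonal u v : u \in UU dA dB dC -> v \in UU dA dB dC -> u != v -> inner u v = 0.
Proof.
rewrite UU_labels => /mapP[l l_in ->] /mapP[l' l'_in ->] neq.
by apply: labels_orth => //; apply: contraNneq neq => ->.
Qed.

Lemma UU_not_spans_all : ~ spans_all (UU dA dB dC).
Proof.
set l0 : label := (famA1, 0, 0, 0)%N; set l1 : label := (famB1, 0, 0, 0)%N.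
have l0_range : in_range l0 by rewrite /=; lia.
have l1_range : in_range l1 by rewrite /=; lia.
have sqnorm l : l \in [:: l0; l1] -> inner (member l) (member l) = (dA.-1 * dC.-1)%:R.
  by rewrite !inE => /orP[] /eqP->; rewrite /= inner_prod3; dot_simpl; rewrite /= mulr1 natrM.
have orth l : l \in labels -> inner (member l) (member l0 - member l1) = 0.
  rewrite mem_labels innerBr => /andP[l_range l_nt].
  have [l_S|l_notS] := eqVneq l.1.1.1 famS.
    case: l l_S {l_range l_nt} => [[[f i] j] k] /= ->.
    by rewrite /stopper !inner_prod3; dot_simpl; rewrite subrr.
  have l_neq0 : l != l0 by apply: contraTneq l_nt => ->.
  have l_neq1 : l != l1 by apply: contraTneq l_nt => ->.
  by rewrite !inner_member_orth ?subrr // (negbTE l_notS).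
move=> span.
have v_orth u : u \in UU dA dB dC -> inner u (member l0 - member l1) = 0.
  by rewrite UU_labels => /mapP[l l_in ->]; exact: orth.
have /eqP := spans_all_orth span v_orth.
rewrite !innerBl !innerBr !sqnorm ?inE ?eqxx ?orbT // !inner_member_orth //.
by rewrite subr0 sub0r opprK -natrD pnatr_eq0 addn_eq0 andbb muln_eq0; lia.
Qed.

Lemma UU_unextendible v : product_state v -> exists2 u, u \in UU dA dB dC & inner u v != 0.
Proof.
case=> v_neq0 [a [b [c vE]]]; rewrite UU_labels {}vE in v_neq0 *.
pose overlap l := inner (member l) (prod3 a b c) != 0.
have [/hasP[l l_in l_overlap]|/hasPn orth] := boolP (has overlap labels).
  by exists (member l); rewrite ?map_f.
exists (stopper dA dB dC); first by apply/mapP; exists (famS, 0, 0, 0)%N; rewrite ?mem_labels.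
apply: stopper_overlap => // l l_range l_nt _; apply/eqP/negbNE/orth.
by rewrite mem_labels l_range.
Qed.
End UPB.

Theorem proposition1 (dA dB dC : nat) :
  (3 <= dA)%N -> (dA <= dB)%N -> (dB <= dC)%N ->
  is_UPB (UU dA dB dC) /\ size (undup (UU dA dB dC)) = (dA * dB * dC - 8)%N.
Proof.
move=> dA_gt2 dAB dBC.
have dB_gt2 : (2 < dB)%N := leq_trans dA_gt2 dAB.
have dC_gt2 : (2 < dC)%N := leq_trans dB_gt2 dBC.
split; last by rewrite undup_id ?uniq_UU // UU_labels size_map size_labels.
split; [exact: UU_product_states | exact: UU_orthogonal | exact: UU_not_spans_all
       | exact: UU_unextendible].
Qed.
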